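(* Let $f:\mathbb{R}^p\to\mathbb{R}$ be convex and twice continuously differentiable, let $g_1,\dots,g_r:\mathbb{R}^p\to\mathbb{R}$ be affine, and let $h_1,\dots,h_s:\mathbb{R}^p\to\mathbb{R}$ be convex and twice continuously differentiable. For $\rho\ge 0$ put $$\mathcal{E}_\rho(\mathbf{x})=f(\mathbf{x})+\rho\sum_{i=1}^r|g_i(\mathbf{x})|+\rho\sum_{j=1}^s\max\{0,h_j(\mathbf{x})\}.$$ 1. (Uniqueness) If $\mathcal{E}_\rho$ is strictly convex, then it has at most one minimizer. 2. (Continuity) Let $\rho_0>0$. If there is an open interval $I\ni\rho_0$ of nonnegative numbers such that $\mathcal{E}_\rho$ is strictly convex and coercive for every $\rho\in I$, then for every $\rho\in I$ the function $\mathcal{E}_\rho$ has a unique minimizer $\mathbf{x}(\rho)$, and the map $\rho\mapsto\mathbf{x}(\rho)$ is continuous at $\rho_0$. 3. (Continuity of coefficients) Suppose in addition to the hypotheses of part 2 that for every $\rho\in I$ the vectors $\{\nabla g_i(\mathbf{x}(\rho)): g_i(\mathbf{x}(\rho))=0\}\cup\{\nabla h_j(\mathbf{x}(\rho)): h_j(\mathbf{x}(\rho))=0\}$ are linearly independent. Then for every $\rho\in I$ there is a unique coefficient vector $(s_1(\rho),\dots,s_r(\rho),t_1(\rho),\dots,t_s(\rho))$ satisfying the optimality condition below at $\mathbf{x}=\mathbf{x}(\rho)$, and the maps $\rho\mapsto s_i(\rho)$ and $\rho\mapsto t_j(\rho)$ are continuous at $\rho_0$.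
   Context: Optimality condition: for $\rho>0$ and $\mathbf{x}\in\mathbb{R}^p$, coefficients $s_i,t_j$ satisfy the optimality condition at $\mathbf{x}$ if $$\mathbf{0}=\nabla f(\mathbf{x})+\rho\sum_{i=1}^r s_i\nabla g_i(\mathbf{x})+\rho\sum_{j=1}^s t_j\nabla h_j(\mathbf{x}),$$ where $s_i=-1$ if $g_i(\mathbf{x})<0$, $s_i\in[-1,1]$ if $g_i(\mathbf{x})=0$, $s_i=1$ if $g_i(\mathbf{x})>0$, and $t_j=0$ if $h_j(\mathbf{x})<0$, $t_j\in[0,1]$ if $h_j(\mathbf{x})=0$, $t_j=1$ if $h_j(\mathbf{x})>0$. (A point $\mathbf{x}$ minimizes $\mathcal{E}_\rho$ iff such coefficients exist.) A function is coercive if it tends to $+\infty$ as $\|\mathbf{x}\|\to\infty$. *)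

From Stdlib Require Import Reals ClassicalEpsilon.
From mathcomp Require Import ssreflect ssrfun ssrbool eqtype ssrnat fintype bigop.
Set Implicit Arguments. Unset Strict Implicit.
Open Scope R_scope.

Definition Vec (p : nat) := 'I_p -> R.

Definition vsum (n : nat) (F : 'I_n -> R) : R := \big[Rplus/R0]_(i < n) F i.

Definition vadd p (x y : Vec p) : Vec p := fun k => x k + y k.
Definition vsub p (x y : Vec p) : Vec p := fun k => x k - y k.
Definition vscale p (a : R) (x : Vec p) : Vec p := fun k => a * x k.
Definition dot p (x y : Vec p) : R := vsum (fun k => x k * y k).
Definition vnorm p (x : Vec p) : R := sqrt (dot x x).

Definition convex p (F : Vec p -> R) : Prop :=
  forall x y t, 0 <= t <= 1 ->
    F (vadd (vscale t x) (vscale (1 - t) y)) <= t * F x + (1 - t) * F y.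

Definition strictly_convex p (F : Vec p -> R) : Prop :=
  forall x y t, x <> y -> 0 < t < 1 ->
    F (vadd (vscale t x) (vscale (1 - t) y)) < t * F x + (1 - t) * F y.

Definition affine p (G : Vec p -> R) : Prop :=
  exists (a : Vec p) (b : R), forall x, G x = dot a x + b.

Definition has_gradient p (F : Vec p -> R) (x gr : Vec p) : Prop :=
  forall eps, 0 < eps -> exists delta, 0 < delta /\
    forall y, vnorm (vsub y x) < delta ->
      Rabs (F y - F x - dot gr (vsub y x)) <= eps * vnorm (vsub y x).

Definition cont_at p (F : Vec p -> R) (x : Vec p) : Prop :=
  forall eps, 0 < eps -> exists delta, 0 < delta /\
    forall y, vnorm (vsub y x) < delta -> Rabs (F y - F x) < eps.

Definition C2 p (F : Vec p -> R) : Prop :=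
  exists (G : Vec p -> Vec p) (H : Vec p -> 'I_p -> Vec p),
    (forall x, has_gradient F x (G x)) /\
    (forall x i, has_gradient (fun y => G y i) x (H x i)) /\
    (forall i j x, cont_at (fun y => H y i j) x).

(* the gradient (well defined whenever F is differentiable at x) *)
Definition grad p (F : Vec p -> R) (x : Vec p) : Vec p :=
  epsilon (inhabits (fun _ => R0)) (fun gr => has_gradient F x gr).

Definition Epen p nr ns (f : Vec p -> R) (g : 'I_nr -> Vec p -> R)
  (h : 'I_ns -> Vec p -> R) (rho : R) (x : Vec p) : R :=
  f x + rho * vsum (fun i => Rabs (g i x)) + rho * vsum (fun j => Rmax 0 (h j x)).

Definition minimizer p (F : Vec p -> R) (x : Vec p) : Prop :=
  forall y, F x <= F y.

Definition coercive p (F : Vec p -> R) : Prop :=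
  forall M, exists R0, forall x, R0 < vnorm x -> M < F x.

Definition opt_cond p nr ns (f : Vec p -> R) (g : 'I_nr -> Vec p -> R)
  (h : 'I_ns -> Vec p -> R) (rho : R) (x : Vec p)
  (s : 'I_nr -> R) (t : 'I_ns -> R) : Prop :=
  (forall k, grad f x k + rho * vsum (fun i => s i * grad (g i) x k)
                        + rho * vsum (fun j => t j * grad (h j) x k) = 0) /\
  (forall i, (g i x < 0 -> s i = -1) /\ (g i x = 0 -> -1 <= s i <= 1) /\
             (g i x > 0 -> s i = 1)) /\
  (forall j, (h j x < 0 -> t j = 0) /\ (h j x = 0 -> 0 <= t j <= 1) /\
             (h j x > 0 -> t j = 1)).

Definition active_lin_indep p nr ns (g : 'I_nr -> Vec p -> R)
  (h : 'I_ns -> Vec p -> R) (x : Vec p) : Prop :=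
  forall (a : 'I_nr -> R) (b : 'I_ns -> R),
    (forall i, g i x <> 0 -> a i = 0) ->
    (forall j, h j x <> 0 -> b j = 0) ->
    (forall k, vsum (fun i => a i * grad (g i) x k)
             + vsum (fun j => b j * grad (h j) x k) = 0) ->
    (forall i, a i = 0) /\ (forall j, b j = 0).

Definition is_open_interval (I : R -> Prop) : Prop :=
  (forall x y z, I x -> I y -> x < z < y -> I z) /\
  (forall x, I x -> exists e, 0 < e /\ forall y, Rabs (y - x) < e -> I y).

From Stdlib Require Import Reals.
From mathcomp Require Import ssreflect ssrfun ssrbool eqtype ssrnat fintype bigop.
From Stdlib Require Import Lra Lia Classical ClassicalEpsilon FunctionalExtensionality.
From mathcomp Require Import seq Rstruct zify.
Open Scope R_scope.
Set Implicit Arguments. Unset Strict Implicit.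

(* Part 1 is the general fact that a strictly convex function has at most one
   minimizer.  For part 2, a continuous coercive function attains its minimum
   (Bolzano-Weierstrass in R^p), so x(rho) exists; minimizers of E_rho for
   rho near rho0 lie in a fixed sublevel set of E_rho1 with rho1 < rho0, and a
   limit of minimizers of E_(r n), r n -> rho0, minimizes E_rho0; hence every
   sequence x(r n) has a subsequence converging to x(rho0).  For part 3 we
   first derive the optimality condition at a minimizer: the one-sided
   directional derivative of E_rho is nonnegative, and a Farkas-type
   multiplier rule for linearly independent active gradients turns this into
   the coefficients s_i, t_j, which are unique by linear independence.  They
   are bounded, the optimality condition is closed under limits, and
   uniqueness at rho0 gives continuity, again by extracting subsequences. *)

Lemma vsum_ext n (F G : 'I_n -> R) : (forall i, F i = G i) -> vsum F = vsum G.
Proof. by move=> H; rewrite /vsum; apply: eq_bigr. Qed.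

Lemma vsum0 n : vsum (fun _ : 'I_n => 0) = 0.
Proof. by rewrite /vsum big1. Qed.

Lemma vsum_add n (F G : 'I_n -> R) : vsum (fun i => F i + G i) = vsum F + vsum G.
Proof. by rewrite /vsum big_split. Qed.

Lemma vsum_scal n c (F : 'I_n -> R) : vsum (fun i => c * F i) = c * vsum F.
Proof. by rewrite /vsum big_distrr. Qed.

Lemma vsum_sub n (F G : 'I_n -> R) : vsum (fun i => F i - G i) = vsum F - vsum G.
Proof.
have -> : vsum (fun i => F i - G i) = vsum (fun i => F i + (-1) * G i).
  by apply: vsum_ext => i; ring.
by rewrite vsum_add vsum_scal; ring.
Qed.

Lemma vsum_le n (F G : 'I_n -> R) : (forall i, F i <= G i) -> vsum F <= vsum G.
Proof. move=> H; rewrite /vsum; elim/big_ind2: _ => //; [lra | move=> *; lra]. Qed.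

Lemma vsum_ge0 n (F : 'I_n -> R) : (forall i, 0 <= F i) -> 0 <= vsum F.
Proof. by move=> H; rewrite -(vsum0 n); apply: vsum_le. Qed.

Lemma vsum_single n (F : 'I_n -> R) k : (forall i, i <> k -> F i = 0) -> vsum F = F k.
Proof.
move=> H; rewrite /vsum (bigD1 k) //= big1; first by rewrite Rplus_0_r.
by move=> i /eqP ik; apply: H.
Qed.

Lemma vsum_term_le n (F : 'I_n -> R) k : (forall i, 0 <= F i) -> F k <= vsum F.
Proof.
move=> H; rewrite /vsum (bigD1 k) //=.
set rest := (X in _ <= _ + X).
have : 0 <= rest by rewrite /rest; elim/big_ind: _ => //; [lra | move=> *; lra].
lra.
Qed.

Lemma vsum_abs n (F : 'I_n -> R) : Rabs (vsum F) <= vsum (fun i => Rabs (F i)).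
Proof.
rewrite /vsum; elim/big_ind2: _ => //.
- by rewrite Rabs_R0; lra.
- by move=> a b c d H1 H2; apply: Rle_trans (Rabs_triang _ _) _; lra.
- by move=> i _; lra.
Qed.

Lemma sum_sq_le (I : Type) (s : seq I) (F : I -> R) : (forall i, 0 <= F i) ->
  \big[Rplus/R0]_(i <- s) (F i * F i)
    <= (\big[Rplus/R0]_(i <- s) F i) * (\big[Rplus/R0]_(i <- s) F i).
Proof.
move=> H; elim: s => [|a s IH]; first by rewrite !big_nil; lra.
rewrite !big_cons.
have S0 : 0 <= \big[Rplus/R0]_(i <- s) F i by elim/big_ind: _ => //; [lra | move=> *; lra].
have := H a; nra.
Qed.

Lemma dot_addl p (a b d : Vec p) : dot (fun l => a l + b l) d = dot a d + dot b d.
Proof. by rewrite /dot -vsum_add; apply: vsum_ext => l; ring. Qed.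

Lemma dot_scall p (a d : Vec p) r : dot (fun l => r * a l) d = r * dot a d.
Proof. by rewrite /dot -vsum_scal; apply: vsum_ext => l; ring. Qed.

Lemma dot_scalr p (a x : Vec p) q : dot a (fun l => q * x l) = q * dot a x.
Proof. by rewrite /dot -vsum_scal; apply: vsum_ext => l; ring. Qed.

Lemma dot_oppl p (a x : Vec p) : dot (fun l => - a l) x = - dot a x.
Proof.
have -> : dot (fun l => - a l) x = dot (fun l => (-1) * a l) x by apply: vsum_ext => l; ring.
by rewrite dot_scall; ring.
Qed.

Lemma dot_oppr p (a x : Vec p) : dot a (fun l => - x l) = - dot a x.
Proof.
have -> : dot a (fun l => - x l) = dot a (fun l => (-1) * x l) by apply: vsum_ext => l; ring.
by rewrite dot_scalr; ring.
Qed.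

Lemma dot_axpyl p (x y d : Vec p) q : dot (fun l => x l - q * y l) d = dot x d - q * dot y d.
Proof. by rewrite /dot -vsum_scal -vsum_sub; apply: vsum_ext => l; ring. Qed.

Lemma dot_axpyr p (a x y : Vec p) q : dot a (fun l => x l - q * y l) = dot a x - q * dot a y.
Proof. by rewrite /dot -vsum_scal -vsum_sub; apply: vsum_ext => l; ring. Qed.

Lemma dot_sub p (a x y : Vec p) : dot a (vsub y x) = dot a y - dot a x.
Proof.
have -> : vsub y x = fun l => y l - 1 * x l.
  by apply: functional_extensionality => l; rewrite /vsub; ring.
by rewrite dot_axpyr; ring.
Qed.

Lemma dot_bigl p (I : Type) (s : seq I) (c : I -> R) (w : I -> Vec p) (d : Vec p) :
  dot (fun l => \big[Rplus/R0]_(k <- s) (c k * w k l)) d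
  = \big[Rplus/R0]_(k <- s) (c k * dot (w k) d).
Proof.
elim: s => [|a s IH].
  rewrite big_nil /dot (@vsum_ext _ _ (fun _ => 0)) ?vsum0 // => l.
  by rewrite big_nil; ring.
rewrite big_cons -IH /dot -vsum_scal -vsum_add; apply: vsum_ext => l.
by rewrite big_cons; ring.
Qed.

Lemma dot_self_ge0 p (x : Vec p) : 0 <= dot x x.
Proof. by apply: vsum_ge0 => i; nra. Qed.

Lemma vnorm_ge0 p (x : Vec p) : 0 <= vnorm x.
Proof. exact: sqrt_pos. Qed.

Lemma coord_le_vnorm p (x : Vec p) k : Rabs (x k) <= vnorm x.
Proof.
rewrite -sqrt_Rsqr_abs /vnorm; apply: sqrt_le_1_alt.
by rewrite /Rsqr /dot; apply: (vsum_term_le (F := fun i => x i * x i)) => i; nra.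
Qed.

Lemma vnorm_le_l1 p (x : Vec p) : vnorm x <= vsum (fun k => Rabs (x k)).
Proof.
have S0 : 0 <= vsum (fun k => Rabs (x k)) by apply: vsum_ge0 => i; apply: Rabs_pos.
rewrite /vnorm -(sqrt_Rsqr _ S0); apply: sqrt_le_1_alt.
have -> : dot x x = vsum (fun k => Rabs (x k) * Rabs (x k)).
  by apply: vsum_ext => i; rewrite -Rabs_mult Rabs_right //; nra.
by apply: sum_sq_le => i; apply: Rabs_pos.
Qed.

Lemma dot_bound p (a z : Vec p) : Rabs (dot a z) <= vsum (fun k => Rabs (a k)) * vnorm z.
Proof.
apply: Rle_trans (vsum_abs _) _; rewrite Rmult_comm -vsum_scal; apply: vsum_le => k.
rewrite Rabs_mult; have := coord_le_vnorm z k.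
have := Rabs_pos (a k); have := Rabs_pos (z k); nra.
Qed.

Lemma vnorm_scale p t (x : Vec p) : vnorm (vscale t x) = Rabs t * vnorm x.
Proof.
rewrite /vnorm /dot.
have -> : vsum (fun k => vscale t x k * vscale t x k) = (t * t) * vsum (fun k => x k * x k).
  by rewrite -vsum_scal; apply: vsum_ext => k; rewrite /vscale; ring.
rewrite sqrt_mult; [|nra | exact: (dot_self_ge0 x)].
by rewrite -[t * t]/(Rsqr t) sqrt_Rsqr_abs.
Qed.

Lemma vnorm_sub_self p (x : Vec p) : vnorm (vsub x x) = 0.
Proof.
rewrite /vnorm /dot (vsum_ext (G := fun _ => 0)) ?vsum0 ?sqrt_0 // => i.
by rewrite /vsub; ring.
Qed.

Lemma vsub_step p (x d : Vec p) t : vsub (vadd x (vscale t d)) x = vscale t d.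
Proof. by apply: functional_extensionality => l; rewrite /vsub /vadd /vscale; ring. Qed.

Definition ek p (k : 'I_p) : Vec p := fun l => if l == k then 1 else 0.

Lemma dot_ek p (a : Vec p) k : dot a (ek k) = a k.
Proof.
rewrite /dot (vsum_single (k := k)); first by rewrite /ek eqxx Rmult_1_r.
by move=> i /eqP hik; rewrite /ek (negbTE hik) Rmult_0_r.
Qed.

Lemma Rabs_le_between a b : Rabs a <= b -> - b <= a <= b.
Proof. by rewrite /Rabs; case: Rcase_abs; lra. Qed.

Lemma Un_cv_ext (u v : nat -> R) l : (forall n, u n = v n) -> Un_cv u l -> Un_cv v l.
Proof. by move=> E H eps he; have [N HN] := H eps he; exists N => n hn; rewrite -E; apply: HN. Qed.

Lemma CV_const c : Un_cv (fun _ => c) c.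
Proof. by move=> eps he; exists 0%nat => n _; rewrite /R_dist Rminus_diag Rabs_R0. Qed.

Lemma CV_bigop (I : Type) (s : seq I) (u : I -> nat -> R) (l : I -> R) :
  (forall i, Un_cv (u i) (l i)) ->
  Un_cv (fun n => \big[Rplus/R0]_(i <- s) u i n) (\big[Rplus/R0]_(i <- s) l i).
Proof.
move=> H; elim: s => [|a s IH].
  rewrite big_nil; apply: (Un_cv_ext (u := fun _ => R0)); last exact: CV_const.
  by move=> n; rewrite big_nil.
rewrite big_cons; apply: (Un_cv_ext (u := fun n => u a n + \big[Rplus/R0]_(i <- s) u i n)).
  by move=> n; rewrite big_cons.
exact: CV_plus.
Qed.

Lemma CV_vsum n (u : 'I_n -> nat -> R) (l : 'I_n -> R) :
  (forall i, Un_cv (u i) (l i)) -> Un_cv (fun m => vsum (fun i => u i m)) (vsum l).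
Proof. exact: CV_bigop. Qed.

Lemma Rmax0_eq x : Rmax 0 x = (x + Rabs x) / 2.
Proof. by rewrite /Rmax /Rabs; case: Rle_dec; case: Rcase_abs; lra. Qed.

Lemma CV_Rmax0 u l : Un_cv u l -> Un_cv (fun n => Rmax 0 (u n)) (Rmax 0 l).
Proof.
move=> H; rewrite Rmax0_eq; apply: (Un_cv_ext (u := fun n => (u n + Rabs (u n)) * / 2)).
  by move=> n; rewrite Rmax0_eq.
apply: CV_mult; last exact: CV_const.
by apply: CV_plus => //; apply: cv_cvabs.
Qed.

Lemma cv_inv_S : Un_cv (fun n => / INR (S n)) 0.
Proof.
move=> eps he; have [N [hN hN0]] := archimed_cor1 eps he; exists N => n hn.
have hp : 0 < / INR (S n) by apply: Rinv_0_lt_compat; apply: lt_0_INR; lia.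
rewrite /R_dist Rminus_0_r Rabs_right; last lra.
apply: Rle_lt_trans hN; apply: Rinv_le_contravar; first by apply: lt_0_INR; lia.
by apply: le_INR; rewrite /ge in hn; lia.
Qed.

Lemma cv_of_inv_S_close (r : nat -> R) rho0 :
  (forall n, Rabs (r n - rho0) < / INR (S n)) -> Un_cv r rho0.
Proof.
move=> hr eps he; have [N HN] := cv_inv_S he; exists N => n hn.
have := HN n hn; rewrite /R_dist Rminus_0_r => h.
by apply: Rlt_trans (hr n) _; apply: Rle_lt_trans (Rle_abs _) h.
Qed.

Lemma cv_bounds u a lo hi : Un_cv u a -> (forall n, lo <= u n <= hi) -> lo <= a <= hi.
Proof.
move=> H hb; split.
  exact: (Rle_cv_lim (fun n => proj1 (hb n)) (CV_const lo) H).
exact: (Rle_cv_lim (fun n => proj2 (hb n)) H (CV_const hi)).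
Qed.

Lemma cv_eventually_const u a c :
  Un_cv u a -> (exists N, forall n, (n >= N)%coq_nat -> u n = c) -> a = c.
Proof.
move=> H [N HN]; apply: (UL_sequence u) => // eps he; exists N => n hn.
by rewrite HN // /R_dist Rminus_diag Rabs_R0.
Qed.

Lemma cv_eventually_neg u a : Un_cv u a -> a < 0 ->
  exists N, forall n, (n >= N)%coq_nat -> u n < 0.
Proof.
move=> H ha; have [N HN] := H (- a) ltac:(lra); exists N => n hn; have := HN n hn.
by rewrite /R_dist /Rabs; case: Rcase_abs; lra.
Qed.

Lemma cv_eventually_pos u a : Un_cv u a -> 0 < a ->
  exists N, forall n, (n >= N)%coq_nat -> 0 < u n.
Proof.
move=> H ha; have [N HN] := H a ha; exists N => n hn; have := HN n hn.
by rewrite /R_dist /Rabs; case: Rcase_abs; lra.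
Qed.

Lemma choice_nat (A : Type) (P : nat -> A -> Prop) :
  (forall n, exists a, P n a) -> exists f, forall n, P n (f n).
Proof.
move=> H; exists (fun n => proj1_sig (constructive_indefinite_description _ (H n))).
by move=> n; apply: proj2_sig.
Qed.

(** Subsequences and the Bolzano-Weierstrass theorem in R^p. *)

Definition extraction (phi : nat -> nat) := forall n, (phi n < phi (S n))%N.

Lemma extraction_ge phi : extraction phi -> forall n, (n <= phi n)%N.
Proof. by move=> H; elim=> [|n IH] //; have := H n; lia. Qed.

Lemma extraction_mono phi : extraction phi -> forall m n, (m < n)%N -> (phi m < phi n)%N.
Proof.
move=> H m; elim=> [|n IH] //; rewrite ltnS leq_eqVlt => /orP [/eqP -> | /IH h].
  exact: H.
by have := H n; lia.
Qed.

Lemma extraction_comp phi psi :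
  extraction phi -> extraction psi -> extraction (fun n => phi (psi n)).
Proof. by move=> H1 H2 n; apply: extraction_mono => //; apply: H2. Qed.

Lemma CV_extract u l phi : extraction phi -> Un_cv u l -> Un_cv (fun n => u (phi n)) l.
Proof.
move=> Hp H eps he; have [N HN] := H eps he; exists N => n hn; apply: HN.
by have := extraction_ge Hp n; move: hn; rewrite /ge; lia.
Qed.

Fixpoint diag_index (pick : nat -> nat -> nat) n := match n with
  | 0%nat => pick 0%nat 0%nat
  | S n => pick (S (diag_index pick n)) (S n) end.

(* Stdlib's Bolzano-Weierstrass gives a cluster point; we extract a subsequence *)
Lemma BW_real (u : nat -> R) M : (forall n, Rabs (u n) <= M) ->
  exists phi l, extraction phi /\ Un_cv (fun n => u (phi n)) l.
Proof.
move=> HM.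
have [l Hl] := @Bolzano_Weierstrass u (fun c => -M <= c <= M) (compact_P3 _ _)
  (fun n => Rabs_le_between (HM n)).
have close : forall N k, exists q, (N <= q)%coq_nat /\ Rabs (u q - l) < / INR (S k).
  move=> N k.
  have pk : 0 < / INR (S k) by apply: Rinv_0_lt_compat; apply: lt_0_INR; lia.
  have [q [h1 h2]] := Hl (disc l (mkposreal _ pk)) N
    (ex_intro _ (mkposreal _ pk) (fun y hy => hy)).
  by exists q; split.
have [pick pickP] := choice_nat (fun N => choice_nat (close N)).
exists (diag_index pick), l; split.
  by move=> n; have [h _] := pickP (S (diag_index pick n)) (S n); simpl; lia.
apply: cv_of_inv_S_close; case=> [|n] /=.
  by case: (pickP 0%nat 0%nat).
by case: (pickP (S (diag_index pick n)) (S n)).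
Qed.

Lemma BW_vec p (u : nat -> Vec p) M : (forall n k, Rabs (u n k) <= M) ->
  exists phi (l : Vec p), extraction phi /\ forall k, Un_cv (fun n => u (phi n) k) (l k).
Proof.
move=> HM.
suff: forall s : seq 'I_p, exists phi (l : Vec p), extraction phi /\
   forall k, k \in s -> Un_cv (fun n => u (phi n) k) (l k).
  move=> /(_ (enum 'I_p)) [phi [l [h1 h2]]]; exists phi, l; split => // k.
  by apply: h2; rewrite mem_enum.
elim=> [|k s [phi [l [h1 h2]]]].
  by exists id, (fun _ => 0); split => // n /=; lia.
have [psi [a [hp ha]]] := BW_real (fun n => HM (phi n) k).
exists (fun n => phi (psi n)), (fun k' => if k' == k then a else l k'); split.
  exact: extraction_comp.
move=> k'; rewrite inE; case: eqP => [-> _ | _ /= hk]; first exact: ha.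
exact: (CV_extract (u := fun n => u (phi n) k') hp (h2 _ hk)).
Qed.

Definition seqcont p (F : Vec p -> R) := forall (y : nat -> Vec p) x,
  Un_cv (fun n => vnorm (vsub (y n) x)) 0 -> Un_cv (fun n => F (y n)) (F x).

Lemma gradient_seqcont p (F : Vec p -> R) x gr (y : nat -> Vec p) : has_gradient F x gr ->
  Un_cv (fun n => vnorm (vsub (y n) x)) 0 -> Un_cv (fun n => F (y n)) (F x).
Proof.
move=> Hg Hy eps he.
have [d [hd Hd]] := Hg 1 Rlt_0_1.
set C := vsum (fun k => Rabs (gr k)) + 1.
have hC : 0 < C by rewrite /C; have := vsum_ge0 (fun k => Rabs_pos (gr k)); lra.
have hm : 0 < Rmin d (eps / C) by apply: Rmin_pos => //; apply: Rdiv_lt_0_compat.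
have [N HN] := Hy _ hm; exists N => n hn.
have := HN n hn; rewrite /R_dist Rminus_0_r Rabs_right; last exact/Rle_ge/vnorm_ge0.
set z := vnorm (vsub (y n) x) => hz.
have hz1 : z < d by apply: Rlt_le_trans hz (Rmin_l _ _).
have hzC : C * z < eps.
  have : z < eps / C by apply: Rlt_le_trans hz (Rmin_r _ _).
  move/(Rmult_lt_compat_l C _ _ hC).
  by have -> : C * (eps / C) = eps by field; lra.
have h1 := Hd _ hz1; have h2 := dot_bound gr (vsub (y n) x).
rewrite /R_dist.
have := Rabs_triang (F (y n) - F x - dot gr (vsub (y n) x)) (dot gr (vsub (y n) x)).
have -> : F (y n) - F x - dot gr (vsub (y n) x) + dot gr (vsub (y n) x) = F (y n) - F x
  by ring.
move: hzC; rewrite /C -/z in h1 h2 *; lra.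
Qed.

Lemma coordinatewise_cv p (y : nat -> Vec p) x :
  (forall k, Un_cv (fun n => y n k) (x k)) -> Un_cv (fun n => vnorm (vsub (y n) x)) 0.
Proof.
move=> H.
have Hs : Un_cv (fun n => vsum (fun k => Rabs (vsub (y n) x k))) 0.
  rewrite -(vsum0 p); apply: CV_vsum => k; rewrite -Rabs_R0 -(Rminus_diag (x k)).
  by apply: cv_cvabs; apply: CV_minus => //; apply: CV_const.
move=> eps he; have [N HN] := Hs eps he; exists N => n hn; have := HN n hn.
rewrite /R_dist !Rminus_0_r => h; apply: Rle_lt_trans h.
rewrite Rabs_right; last exact/Rle_ge/vnorm_ge0.
exact: Rle_trans (vnorm_le_l1 _) (Rle_abs _).
Qed.

Lemma cv_dist (u : nat -> R) l : Un_cv u l -> Un_cv (fun n => Rabs (u n - l)) 0.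
Proof.
move=> H eps he; have [N HN] := H eps he; exists N => n hn.
by rewrite /R_dist Rminus_0_r Rabs_Rabsolu; apply: HN.
Qed.

(* Continuity at rho0 (relative to J) of a deviation D, from the sequential
   criterion: every sequence of J tending to rho0 has a subsequence along
   which D tends to 0.  Only sequences staying r-close to rho0 need be tested. *)
Lemma continuity_by_subsequences (J : R -> Prop) rho0 r (D : R -> R) : 0 < r ->
  (forall rn, (forall n, J (rn n) /\ Rabs (rn n - rho0) < r) -> Un_cv rn rho0 ->
     exists psi, extraction psi /\ Un_cv (fun n => D (rn (psi n))) 0) ->
  forall eps, 0 < eps -> exists delta, 0 < delta /\
    forall rho, J rho -> Rabs (rho - rho0) < delta -> D rho < eps.
Proof.
move=> hr H eps he; apply: NNPP => Hn.
have bad : forall n, exists rho, (J rho /\ Rabs (rho - rho0) < Rmin r (/ INR (S n)))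
                                 /\ eps <= D rho.
  move=> n; apply: NNPP => h2; apply: Hn; exists (Rmin r (/ INR (S n))); split.
    by apply: Rmin_pos => //; apply: Rinv_0_lt_compat; apply: lt_0_INR; lia.
  by move=> rho hJ hrho; apply: Rnot_le_lt => h3; apply: h2; exists rho.
have [rn hrn] := choice_nat bad.
have hcv : Un_cv rn rho0.
  by apply: cv_of_inv_S_close => n; apply: Rlt_le_trans (proj2 (proj1 (hrn n))) (Rmin_r _ _).
have [psi [_ hc]] := H rn (fun n => conj (proj1 (proj1 (hrn n)))
  (Rlt_le_trans _ _ _ (proj2 (proj1 (hrn n))) (Rmin_l _ _))) hcv.
have [N HN] := hc eps he; have := HN N (le_n N); rewrite /R_dist Rminus_0_r => h.
by have := proj2 (hrn (psi N)); have := Rle_abs (D (rn (psi N))); lra.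
Qed.

(** Existence and uniqueness of minimizers. *)

Lemma coercive_bound p (F : Vec p -> R) M : coercive F ->
  exists B, forall x, F x <= M -> forall k, Rabs (x k) <= B.
Proof.
move=> HC; have [B HB] := HC M; exists B => x hx k.
apply: Rle_trans (coord_le_vnorm x k) _.
by case: (Rle_dec (vnorm x) B) => // /Rnot_le_lt /HB; lra.
Qed.

Lemma sublevel_subsequence p (F : Vec p -> R) M (y : nat -> Vec p) :
  seqcont F -> coercive F -> (forall n, F (y n) <= M) ->
  exists phi l, extraction phi /\ Un_cv (fun n => F (y (phi n))) (F l).
Proof.
move=> HF HC hy; have [B HB] := coercive_bound M HC.
have [phi [l [hp hl]]] := BW_vec (M := B) (u := y) (fun n => HB _ (hy n)).
by exists phi, l; split => //; apply: HF; apply: coordinatewise_cv.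
Qed.

Lemma coercive_bounded_below p (F : Vec p -> R) :
  seqcont F -> coercive F -> exists m, forall x, m <= F x.
Proof.
move=> HF HC; apply: NNPP => hn.
have below : forall n, exists x, F x < - INR n.
  move=> n; apply: NNPP => h2; apply: hn; exists (- INR n) => x.
  by apply: Rnot_lt_le => h3; apply: h2; exists x.
have [y hy] := choice_nat below.
have hy0 : forall n, F (y n) <= 0 by move=> n; have := hy n; have := pos_INR n; lra.
have [phi [l [hp hl]]] := sublevel_subsequence HF HC hy0.
have [N HN] := hl 1 Rlt_0_1.
have [n0 hn0] := INR_unbounded (- F l + 1).
have := HN (N + n0)%nat ltac:(rewrite /ge; lia); rewrite /R_dist => /Rabs_def2 [_ h].
have := hy (phi (N + n0)%nat).
have : INR n0 <= INR (phi (N + n0)%nat).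
  by apply: le_INR; have := extraction_ge hp (N + n0); lia.
lra.
Qed.

Lemma exists_minimizer p (F : Vec p -> R) :
  seqcont F -> coercive F -> exists x, minimizer F x.
Proof.
move=> HF HC; have [m Hm] := coercive_bounded_below HF HC.
pose E r := exists x, r = - F x.
have hb : bound E by exists (- m) => r [x ->]; have := Hm x; lra.
have [M [HM1 HM2]] := completeness E hb (ex_intro _ _ (ex_intro _ (fun _ => 0) erefl)).
have Hinf : forall x, - M <= F x by move=> x; have := HM1 (- F x) (ex_intro _ x erefl); lra.
have near_inf : forall n, exists x, F x < - M + / INR (S n).
  move=> n; have hpos : 0 < / INR (S n) by apply: Rinv_0_lt_compat; apply: lt_0_INR; lia.
  apply: NNPP => h; have : M <= M - / INR (S n); last lra.
  apply: HM2 => r [x ->].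
  suff: - M + / INR (S n) <= F x by lra.
  by apply: Rnot_lt_le => h3; apply: h; exists x.
have [y hy] := choice_nat near_inf.
have hlev : forall n, F (y n) <= - M + 1.
  move=> n; have := hy n; suff : / INR (S n) <= 1 by lra.
  by rewrite -Rinv_1; apply: Rinv_le_contravar; [lra | apply: (le_INR 1); lia].
have [phi [l [hp hl]]] := sublevel_subsequence HF HC hlev.
exists l => z; apply: Rle_trans _ (Hinf z).
have hcv : Un_cv (fun n => - M + / INR (S (phi n))) (- M).
  rewrite -{2}(Rplus_0_r (- M)); apply: CV_plus; first exact: CV_const.
  exact: (CV_extract (u := fun n => / INR (S n)) hp cv_inv_S).
by apply: (Rle_cv_lim _ hl hcv) => n; apply: Rlt_le; apply: hy.
Qed.

Lemma strictly_convex_unique_minimizer p (F : Vec p -> R) : strictly_convex F ->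
  forall x y, minimizer F x -> minimizer F y -> x = y.
Proof.
move=> HF x y hx hy; apply: NNPP => hne.
have := HF x y (/2) hne ltac:(lra).
have := hx (vadd (vscale (/2) x) (vscale (1 - /2) y)).
by have := hx y; have := hy x; lra.
Qed.

Section Penalty.
Variables (p nr ns : nat) (f : Vec p -> R).
Variables (g : 'I_nr -> Vec p -> R) (h : 'I_ns -> Vec p -> R).

Lemma Epen_mono r1 r2 x : r1 <= r2 -> Epen f g h r1 x <= Epen f g h r2 x.
Proof.
move=> hr; rewrite /Epen.
have h1 : 0 <= vsum (fun i => Rabs (g i x)) by apply: vsum_ge0 => i; apply: Rabs_pos.
have h2 : 0 <= vsum (fun j => Rmax 0 (h j x)) by apply: vsum_ge0 => j; apply: Rmax_l.
by have := Rmult_le_compat_r _ _ _ h1 hr; have := Rmult_le_compat_r _ _ _ h2 hr; lra.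
Qed.

(* the minimizer of E_rho, whenever there is one *)
Definition xmin rho : Vec p :=
  epsilon (inhabits (fun _ => R0)) (fun x => minimizer (Epen f g h rho) x).

Lemma minimizers_bounded rho1 rho2 (x0 : Vec p) : coercive (Epen f g h rho1) ->
  exists B, forall rho x, rho1 <= rho <= rho2 -> minimizer (Epen f g h rho) x ->
    forall k, Rabs (x k) <= B.
Proof.
move=> HC; have [B HB] := coercive_bound (Epen f g h rho2 x0) HC.
exists B => rho x [h1 h2] hx; apply: HB.
apply: Rle_trans (Epen_mono x h1) _; apply: Rle_trans (hx x0) _.
exact: Epen_mono.
Qed.

Hypotheses (Hf : seqcont f) (Hg : forall i, seqcont (g i)) (Hh : forall j, seqcont (h j)).

Lemma Epen_joint_cv (r : nat -> R) rho (x : nat -> Vec p) l :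
  Un_cv r rho -> Un_cv (fun n => vnorm (vsub (x n) l)) 0 ->
  Un_cv (fun n => Epen f g h (r n) (x n)) (Epen f g h rho l).
Proof.
move=> hr hx; rewrite /Epen.
apply: CV_plus; first apply: CV_plus; first exact: Hf.
- apply: CV_mult => //; apply: (CV_vsum (u := fun i n => Rabs (g i (x n)))) => i.
  by apply: cv_cvabs; apply: Hg.
- apply: CV_mult => //; apply: (CV_vsum (u := fun i n => Rmax 0 (h i (x n)))) => i.
  by apply: CV_Rmax0; apply: Hh.
Qed.

Lemma Epen_seqcont rho : seqcont (Epen f g h rho).
Proof. by move=> y x; apply: Epen_joint_cv; apply: CV_const. Qed.

Lemma xmin_spec rho : strictly_convex (Epen f g h rho) -> coercive (Epen f g h rho) ->
  minimizer (Epen f g h rho) (xmin rho) /\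
  (forall y, minimizer (Epen f g h rho) y -> y = xmin rho).
Proof.
move=> hsc hc.
have hmin : minimizer (Epen f g h rho) (xmin rho).
  by apply: epsilon_spec; apply: exists_minimizer hc; apply: Epen_seqcont.
by split => // y hy; apply: (strictly_convex_unique_minimizer hsc hy hmin).
Qed.

Lemma limit_of_minimizers (r : nat -> R) rho (x : nat -> Vec p) l :
  Un_cv r rho -> Un_cv (fun n => vnorm (vsub (x n) l)) 0 ->
  (forall n, minimizer (Epen f g h (r n)) (x n)) -> minimizer (Epen f g h rho) l.
Proof.
move=> hr hx hmin y.
have hy : Un_cv (fun n => Epen f g h (r n) y) (Epen f g h rho y).
  apply: (Epen_joint_cv (x := fun _ => y)) => //.
  apply: (Un_cv_ext (u := fun _ => 0)); last exact: CV_const.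
  by move=> n; rewrite vnorm_sub_self.
by apply: (Rle_cv_lim _ (Epen_joint_cv hr hx) hy) => n; apply: hmin.
Qed.

(* Minimizers
   for rho near rho0 are bounded, so every sequence has a convergent
   subsequence, whose limit minimizes E_rho0 and hence equals x(rho0). *)
Lemma xmin_continuous (J : R -> Prop) rho0 : is_open_interval J -> J rho0 ->
  (forall rho, J rho -> strictly_convex (Epen f g h rho) /\ coercive (Epen f g h rho)) ->
  forall eps, 0 < eps -> exists delta, 0 < delta /\
    forall rho, J rho -> Rabs (rho - rho0) < delta ->
      vnorm (vsub (xmin rho) (xmin rho0)) < eps.
Proof.
move=> [_ HJopen] J0 HSC.
have Hmin rho : J rho -> minimizer (Epen f g h rho) (xmin rho).
  by move=> hJ; have [hs hc] := HSC rho hJ; case: (xmin_spec hs hc).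
have [e [he HJe]] := HJopen rho0 J0.
have J1 : J (rho0 - e / 2) by apply: HJe; rewrite Rabs_left; lra.
have [B HB] := minimizers_bounded (rho0 + e / 2) (xmin rho0) (proj2 (HSC _ J1)).
apply: (continuity_by_subsequences (r := e / 2)); first lra.
move=> rn hrn hcv.
have hbd : forall n k, Rabs (xmin (rn n) k) <= B.
  move=> n; have [hJ /Rlt_le /Rabs_le_between hclose] := hrn n.
  by apply: HB (Hmin _ hJ); lra.
have [phi [l [hp hl]]] := BW_vec hbd.
have hxl := coordinatewise_cv hl.
have hl0 : l = xmin rho0.
  have [hs hc] := HSC rho0 J0; apply: (proj2 (xmin_spec hs hc)).
  apply: (limit_of_minimizers (CV_extract hp hcv) hxl) => n.
  exact: Hmin (proj1 (hrn (phi n))).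
by exists phi; split => //; rewrite -hl0.
Qed.

End Penalty.

(** One-sided directional estimates and the first-order necessary condition. *)

Definition dir_upper p (F : Vec p -> R) (x d : Vec p) (c : R) :=
  forall eps, 0 < eps -> exists delta, 0 < delta /\
    forall t, 0 < t < delta -> F (vadd x (vscale t d)) - F x <= t * c + t * eps.

Lemma minimizer_dir_upper p (F : Vec p -> R) x d c :
  minimizer F x -> dir_upper F x d c -> 0 <= c.
Proof.
move=> hmin hF; apply: Rnot_lt_le => hc.
have [delta [hd Hd]] := hF (- c / 2) ltac:(lra).
have := Hd (delta / 2) ltac:(lra); have := hmin (vadd x (vscale (delta / 2) d)).
have : 0 < delta / 2 by lra.
nra.
Qed.

Lemma dir_upper_ext p (F G : Vec p -> R) x d c :
  (forall y, F y = G y) -> dir_upper F x d c -> dir_upper G x d c.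
Proof.
move=> E hF eps he; have [delta [hd Hd]] := hF eps he.
by exists delta; split => // t ht; rewrite -!E; apply: Hd.
Qed.

Lemma dir_upper_add p (F G : Vec p -> R) x d c1 c2 :
  dir_upper F x d c1 -> dir_upper G x d c2 -> dir_upper (fun y => F y + G y) x d (c1 + c2).
Proof.
move=> hF hG eps he.
have [d1 [hd1 H1]] := hF (eps / 2) ltac:(lra).
have [d2 [hd2 H2]] := hG (eps / 2) ltac:(lra).
exists (Rmin d1 d2); split => [|t [ht0 ht1]]; first exact: Rmin_pos.
have := H1 t (conj ht0 (Rlt_le_trans _ _ _ ht1 (Rmin_l _ _))).
have := H2 t (conj ht0 (Rlt_le_trans _ _ _ ht1 (Rmin_r _ _))).
lra.
Qed.

Lemma dir_upper_scale p (F : Vec p -> R) x d c a :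
  0 <= a -> dir_upper F x d c -> dir_upper (fun y => a * F y) x d (a * c).
Proof.
move=> ha hF eps he.
have he' : 0 < eps / (a + 1) by apply: Rdiv_lt_0_compat; lra.
have [delta [hd Hd]] := hF _ he'; exists delta; split => // t ht.
have hle : a * (eps / (a + 1)) <= eps.
  apply: (Rmult_le_reg_r (a + 1)); first lra.
  have -> : a * (eps / (a + 1)) * (a + 1) = a * eps by field; lra.
  nra.
have := Rmult_le_compat_l _ _ _ ha (Hd t ht); have := proj1 ht; nra.
Qed.

Lemma dir_upper_vsum p n (F : 'I_n -> Vec p -> R) x d (c : 'I_n -> R) :
  (forall i, dir_upper (F i) x d (c i)) ->
  dir_upper (fun y => vsum (fun i => F i y)) x d (vsum c).
Proof.
move=> hF; rewrite /vsum; elim: (index_enum _) => [|i s IH].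
  rewrite big_nil; apply: (dir_upper_ext (F := fun _ => 0)).
    by move=> y; rewrite big_nil.
  move=> eps he; exists 1; split => [|t ht]; first lra.
  nra.
rewrite big_cons; apply: (dir_upper_ext (F := fun y => F i y + \big[Rplus/R0]_(j <- s) F j y)).
  by move=> y; rewrite big_cons.
exact: dir_upper_add.
Qed.

Lemma gradient_dir_estimate p (F : Vec p -> R) x b d : has_gradient F x b ->
  forall eps, 0 < eps -> exists delta, 0 < delta /\ forall t, 0 < t < delta ->
    Rabs (F (vadd x (vscale t d)) - F x - t * dot b d) <= t * eps.
Proof.
move=> Hg eps he.
set D := vnorm d; have hD : 0 <= D by apply: vnorm_ge0.
have he' : 0 < eps / (D + 1) by apply: Rdiv_lt_0_compat; lra.
have [d1 [hd1 Hd1]] := Hg _ he'.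
exists (d1 / (D + 1)); split => [|t [ht0 ht1]]; first by apply: Rdiv_lt_0_compat; lra.
have hn : vnorm (vsub (vadd x (vscale t d)) x) = t * D.
  by rewrite vsub_step vnorm_scale Rabs_right //; lra.
have htD : t * (D + 1) < d1.
  have := Rmult_lt_compat_r (D + 1) _ _ ltac:(lra) ht1.
  by have -> : d1 / (D + 1) * (D + 1) = d1 by field; lra.
have := Hd1 (vadd x (vscale t d)) ltac:(rewrite hn; nra).
rewrite hn vsub_step /vscale dot_scalr => h; apply: Rle_trans h _.
have : eps / (D + 1) * D <= eps.
  apply: (Rmult_le_reg_r (D + 1)); first lra.
  have -> : eps / (D + 1) * D * (D + 1) = eps * D by field; lra.
  nra.
have : 0 <= eps / (D + 1) by lra.
nra.
Qed.

Lemma dir_upper_gradient p (F : Vec p -> R) x b d :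
  has_gradient F x b -> dir_upper F x d (dot b d).
Proof.
move=> Hg eps he; have [delta [hd Hd]] := gradient_dir_estimate d Hg he.
by exists delta; split => // t /Hd /Rabs_le_between; lra.
Qed.

Lemma gradient_opp p (F : Vec p -> R) x b : has_gradient F x b ->
  has_gradient (fun y => - F y) x (fun l => - b l).
Proof.
move=> Hg eps he; have [d1 [hd1 Hd1]] := Hg eps he; exists d1; split => // y hy.
rewrite dot_oppl.
have -> : - F y - - F x - - dot b (vsub y x) = - (F y - F x - dot b (vsub y x)) by ring.
by rewrite Rabs_Ropp; apply: Hd1.
Qed.

Definition sgnR (y : R) : R := if Rlt_dec 0 y then 1 else if Rlt_dec y 0 then -1 else 0.
Definition posR (y : R) : R := if Rlt_dec 0 y then 1 else 0.

(* right derivative of max(0, .) at y in the direction q *)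
Definition max0_dir (y q : R) : R :=
  if Rlt_dec 0 y then q else if Rlt_dec y 0 then 0 else Rmax 0 q.

Lemma max0_dir_posR y q : max0_dir y q = posR y * q + (if y == 0 then Rmax 0 q else 0).
Proof.
rewrite /max0_dir /posR; case: eqP => [->|hy]; repeat case: Rlt_dec => /=; intros;
  try lra; ring.
Qed.

Lemma Rabs_max0 u : Rabs u = Rmax 0 u + Rmax 0 (- u).
Proof. by rewrite /Rmax /Rabs; repeat case: Rle_dec; case: Rcase_abs; intros; lra. Qed.

Lemma max0_dir_sgnR y q :
  max0_dir y q + max0_dir (- y) (- q) = sgnR y * q + (if y == 0 then Rabs q else 0).
Proof.
rewrite /max0_dir /sgnR; case: eqP => hy.
  by rewrite hy; repeat case: Rlt_dec => /=; intros; try lra; rewrite Rabs_max0; ring.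
by repeat case: Rlt_dec => /=; intros; try lra; ring.
Qed.

(* increment of max(0, .) from y to y + t q + r, with r = o(t) and, when y <> 0,
   t small enough that y + t q + r keeps the sign of y *)
Lemma max0_increment y q r t eps : 0 < t -> 0 < eps -> Rabs r <= t * eps ->
  (y <> 0 -> t * (Rabs q + eps) < Rabs y) ->
  Rmax 0 (y + t * q + r) - Rmax 0 y <= t * max0_dir y q + t * eps.
Proof.
move=> ht he /Rabs_le_between hr hy.
have hq : - (t * Rabs q) <= t * q <= t * Rabs q.
  by have := Rabs_le_between (Rle_refl (Rabs q)); split; nra.
have hRm : t * Rmax 0 q = Rmax 0 (t * q).
  by rewrite /Rmax; case: Rle_dec => h; case: Rle_dec => h'; nra.
rewrite /max0_dir; case: Rlt_dec => h1 /=.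
  have := hy ltac:(lra); rewrite Rmult_plus_distr_l (Rabs_right y); last lra.
  move: hq hr; set tq := t * q; set ta := t * Rabs q; set te := t * eps.
  by rewrite /Rmax; repeat case: Rle_dec; intros; lra.
case: Rlt_dec => h2 /=.
  have := hy ltac:(lra); rewrite Rmult_plus_distr_l (Rabs_left y); last lra.
  move: hq hr; set tq := t * q; set ta := t * Rabs q; set te := t * eps.
  by rewrite Rmult_0_r /Rmax; repeat case: Rle_dec; intros; lra.
have -> : y = 0 by lra.
rewrite hRm; have hs1 : 0 <= q -> 0 <= t * q by nra.
have hs2 : q < 0 -> t * q < 0 by nra.
move: hq hr hs1 hs2; set tq := t * q; set te := t * eps.
by rewrite /Rmax; case: (Rle_dec 0 q) => hq'; repeat case: Rle_dec; intros; try lra.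
Qed.

Lemma dir_upper_max0 p (H : Vec p -> R) x b d : has_gradient H x b ->
  dir_upper (fun y => Rmax 0 (H y)) x d (max0_dir (H x) (dot b d)).
Proof.
move=> Hg eps he; have [d1 [hd1 Hd1]] := gradient_dir_estimate d Hg he.
set q := dot b d.
have step t : 0 < t < d1 -> (H x <> 0 -> t * (Rabs q + eps) < Rabs (H x)) ->
    Rmax 0 (H (vadd x (vscale t d))) - Rmax 0 (H x) <= t * max0_dir (H x) q + t * eps.
  move=> ht hsmall.
  have := max0_increment (y := H x) (r := H (vadd x (vscale t d)) - H x - t * q)
    (proj1 ht) he (Hd1 t ht) hsmall.
  by have -> : H x + t * q + (H (vadd x (vscale t d)) - H x - t * q)
             = H (vadd x (vscale t d)) by ring.
have hq : 0 < Rabs q + eps by have := Rabs_pos q; lra.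
case: (Req_dec (H x) 0) => hx.
  by exists d1; split => // t ht; apply: step.
exists (Rmin d1 (Rabs (H x) / (Rabs q + eps))); split.
  by apply: Rmin_pos => //; apply: Rdiv_lt_0_compat => //; apply: Rabs_pos_lt.
move=> t [ht0 ht1]; apply: step => [|_].
  by split => //; apply: Rlt_le_trans ht1 (Rmin_l _ _).
have := Rmult_lt_compat_r _ _ _ hq (Rlt_le_trans _ _ _ ht1 (Rmin_r _ _)).
by have -> : Rabs (H x) / (Rabs q + eps) * (Rabs q + eps) = Rabs (H x) by field; lra.
Qed.

Lemma dir_upper_pos_part p (H : Vec p -> R) x b d : has_gradient H x b ->
  dir_upper (fun y => Rmax 0 (H y)) x d
    (posR (H x) * dot b d + (if H x == 0 then Rmax 0 (dot b d) else 0)).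
Proof. by rewrite -max0_dir_posR; apply: dir_upper_max0. Qed.

Lemma dir_upper_abs p (G : Vec p -> R) x a d : has_gradient G x a ->
  dir_upper (fun y => Rabs (G y)) x d
    (sgnR (G x) * dot a d + (if G x == 0 then Rabs (dot a d) else 0)).
Proof.
move=> Hg; rewrite -max0_dir_sgnR -dot_oppl.
apply: (dir_upper_ext (F := fun y => Rmax 0 (G y) + Rmax 0 (- G y))).
  by move=> y; rewrite Rabs_max0.
apply: dir_upper_add; first exact: dir_upper_max0.
exact: (dir_upper_max0 d (gradient_opp Hg)).
Qed.

Section FirstOrder.
Variables (p nr ns : nat) (f : Vec p -> R).
Variables (g : 'I_nr -> Vec p -> R) (h : 'I_ns -> Vec p -> R).

Lemma penalty_first_order rho x gf (ga : 'I_nr -> Vec p) (hb : 'I_ns -> Vec p) d :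
  0 <= rho -> minimizer (Epen f g h rho) x -> has_gradient f x gf ->
  (forall i, has_gradient (g i) x (ga i)) -> (forall j, has_gradient (h j) x (hb j)) ->
  0 <= dot gf d
     + rho * vsum (fun i => sgnR (g i x) * dot (ga i) d
                            + (if g i x == 0 then Rabs (dot (ga i) d) else 0))
     + rho * vsum (fun j => posR (h j x) * dot (hb j) d
                            + (if h j x == 0 then Rmax 0 (dot (hb j) d) else 0)).
Proof.
move=> hrho hmin hf hg hh; apply: (minimizer_dir_upper hmin).
apply: dir_upper_add; first apply: dir_upper_add.
- exact: dir_upper_gradient.
- by apply: dir_upper_scale => //; apply: dir_upper_vsum => i; apply: dir_upper_abs.
- by apply: dir_upper_scale => //; apply: dir_upper_vsum => j; apply: dir_upper_pos_part.
Qed.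

End FirstOrder.

(** Finite-dimensional linear algebra: a Farkas-type multiplier rule. *)

Lemma span_or_perp p (I : eqType) (w : I -> Vec p) (s : seq I) : uniq s -> forall u : Vec p,
  (exists c : I -> R, forall l, u l = \big[Rplus/R0]_(k <- s) (c k * w k l)) \/
  (exists d : Vec p, (forall k, k \in s -> dot (w k) d = 0) /\ dot u d <> 0).
Proof.
elim: s => [|a s IH] /=.
  move=> _ u; case: (classic (forall l, u l = 0)) => hu.
    by left; exists (fun _ => 0) => l; rewrite big_nil; apply: hu.
  right; exists u; split => //; move: hu => /not_all_ex_not [l hl].
  have := vsum_term_le (F := fun k => u k * u k) l (fun k => ltac:(nra)).
  rewrite /dot; have : 0 < u l * u l by nra.
  lra.
move=> /andP [ha hs] u.
case: (IH hs (w a)) => [[c hc] | [e [he hae]]].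
  case: (IH hs u) => [[c' hc'] | [d [hd hud]]].
    left; exists (fun k => if k == a then 0 else c' k) => l.
    rewrite big_cons eqxx Rmult_0_l Rplus_0_l hc'; apply: eq_big_seq => k hk.
    by case: eqP => // ka; subst k; rewrite hk in ha.
  right; exists d; split => // k0; rewrite inE => /orP [/eqP -> | hk]; last exact: hd.
  have -> : w a = (fun l => \big[Rplus/R0]_(k <- s) (c k * w k l))
    by apply: functional_extensionality.
  by rewrite dot_bigl big_seq big1 // => k hk; rewrite hd //; ring.
set r := dot u e / dot (w a) e.
case: (IH hs (fun l => u l - r * w a l)) => [[c hc] | [d [hd hud]]].
  left; exists (fun k => if k == a then r else c k) => l; rewrite big_cons eqxx.
  rewrite (eq_big_seq (fun k => c k * w k l)); first by rewrite -hc; ring.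
  by move=> k hk; case: eqP => // ka; subst k; rewrite hk in ha.
right; exists (fun l => d l - dot (w a) d / dot (w a) e * e l); split.
  move=> k; rewrite inE => /orP [/eqP -> | hk].
    by rewrite dot_axpyr; field.
  by rewrite dot_axpyr (hd k hk) (he k hk); ring.
rewrite dot_axpyr; move: hud; rewrite dot_axpyl /r => hud heq; apply: hud.
by rewrite -heq; field.
Qed.

Definition lin_indep_on p (I : finType) (W : I -> Vec p) (act : pred I) :=
  forall c : I -> R, (forall k, ~~ act k -> c k = 0) ->
    (forall l, \big[Rplus/R0]_(k : I) (c k * W k l) = 0) -> forall k, c k = 0.

Lemma dual_vector p (I : finType) (W : I -> Vec p) (act : pred I) : lin_indep_on W act ->
  forall k0, act k0 -> exists d, dot (W k0) d = 1 /\
    forall k, act k -> k != k0 -> dot (W k) d = 0.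
Proof.
move=> HLI k0 hk0.
set s := [seq k <- index_enum I | act k && (k != k0)].
have us : uniq s by apply: filter_uniq; apply: index_enum_uniq.
case: (span_or_perp W us (W k0)) => [[c hc] | [d [hd hnz]]].
  exfalso.
  suff: (if act k0 then (if k0 == k0 then -1 else c k0) else 0) = 0.
    by rewrite hk0 eqxx; lra.
  apply: (HLI (fun k => if act k then (if k == k0 then -1 else c k) else 0)).
    by move=> k /negbTE ->.
  move=> l; rewrite (bigD1 k0) //= hk0 eqxx hc /s big_filter.
  have cancel a b : a = b -> -1 * a + b = 0 by move=> ->; ring.
  apply: cancel; rewrite [RHS]big_mkcond [LHS]big_mkcond; apply: eq_bigr => k _.
  by case: (act k); case: eqP => /= _; ring.
exists (fun l => / dot (W k0) d * d l); split; first by rewrite dot_scalr; field.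
move=> k hk hne; rewrite dot_scalr (hd k) ?Rmult_0_r //.
by rewrite mem_filter hk hne mem_index_enum.
Qed.

Section Multipliers.
Variables (p : nat) (I : finType) (W : I -> Vec p) (act : pred I).
Variables (psi : I -> R -> R) (v : Vec p) (rho : R).

Hypothesis psi0 : forall k, psi k 0 = 0.
Hypothesis dominated : forall d, 0 <= dot v d
  + rho * \big[Rplus/R0]_(k : I) (if act k then psi k (dot (W k) d) else 0).

Lemma multipliers_exist : exists c : I -> R, (forall k, ~~ act k -> c k = 0) /\
  (forall l, v l + \big[Rplus/R0]_(k : I) (c k * W k l) = 0).
Proof.
set s := [seq k <- index_enum I | act k].
have us : uniq s by apply: filter_uniq; apply: index_enum_uniq.
case: (span_or_perp W us v) => [[c hc] | [d [hd hnz]]]; last first.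
  have hperp e : (forall k, act k -> dot (W k) e = 0) ->
      \big[Rplus/R0]_(k : I) (if act k then psi k (dot (W k) e) else 0) = 0.
    by move=> he; apply: big1 => k _; case hk: (act k); rewrite ?he.
  have hd' k : act k -> dot (W k) d = 0.
    by move=> hk; apply: hd; rewrite mem_filter hk mem_index_enum.
  have := dominated d; have := dominated (fun l => - d l).
  rewrite !hperp // => [|k hk]; last by rewrite dot_oppr hd' // Ropp_0.
  by rewrite dot_oppr; lra.
exists (fun k => if act k then - c k else 0); split; first by move=> k /negbTE ->.
move=> l; rewrite hc /s big_filter big_mkcond -big_split /=.
by apply: big1 => k _; case: (act k); ring.
Qed.

(* and the multipliers are bounded through the dual family *)
Lemma multipliers_bounded (c : I -> R) : lin_indep_on W act ->
  (forall k, ~~ act k -> c k = 0) ->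
  (forall l, v l + \big[Rplus/R0]_(k : I) (c k * W k l) = 0) ->
  forall k, act k -> c k <= rho * psi k 1 /\ - c k <= rho * psi k (-1).
Proof.
move=> HLI hc0 heq k0 hk0; have [d [hd1 hd2]] := dual_vector HLI hk0.
have test e q : dot (W k0) e = q -> (forall k, act k -> k != k0 -> dot (W k) e = 0) ->
    dot v e = - c k0 * q /\
    \big[Rplus/R0]_(k : I) (if act k then psi k (dot (W k) e) else 0) = psi k0 q.
  move=> he1 he2; split.
    have -> : v = fun l => \big[Rplus/R0]_(k : I) ((- c k) * W k l).
      apply: functional_extensionality => l; have := heq l.
      suff -> : \big[Rplus/R0]_(k : I) ((- c k) * W k l)
              = - \big[Rplus/R0]_(k : I) (c k * W k l) by lra.
      by elim/big_rec2: _ => [|k a b _ ->]; ring.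
    rewrite dot_bigl (bigD1 k0) //= he1 big1 ?Rplus_0_r // => k hk.
    by case hak: (act k); [rewrite he2 // Rmult_0_r | rewrite hc0 ?hak // Ropp_0 Rmult_0_l].
  rewrite (bigD1 k0) //= hk0 he1 big1 ?Rplus_0_r // => k hk.
  by case hak: (act k) => //; rewrite he2.
have [e1 e2] := test d 1 hd1 hd2.
have [e3 e4] := test (fun l => - d l) (-1) ltac:(by rewrite dot_oppr hd1)
  (fun k hk hne => ltac:(by rewrite dot_oppr hd2 // Ropp_0)).
by have := dominated d; have := dominated (fun l => - d l); rewrite e1 e2 e3 e4; lra.
Qed.

End Multipliers.

(* gradients are unique: test in the coordinate directions *)
Lemma has_gradient_unique p (F : Vec p -> R) x a b :
  has_gradient F x a -> has_gradient F x b -> a = b.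
Proof.
move=> Ha Hb; apply: functional_extensionality => k.
suff small : forall eps, 0 < eps -> Rabs (a k - b k) <= 2 * eps.
  apply: NNPP => hne; have hpos : 0 < Rabs (a k - b k) by apply: Rabs_pos_lt; lra.
  by have := small (Rabs (a k - b k) / 4) ltac:(lra); lra.
move=> eps he.
have [d1 [hd1 H1]] := gradient_dir_estimate (ek k) Ha he.
have [d2 [hd2 H2]] := gradient_dir_estimate (ek k) Hb he.
set t := Rmin d1 d2 / 2; have hm : 0 < Rmin d1 d2 by apply: Rmin_pos.
have ht : 0 < t by rewrite /t; lra.
have := H1 t ltac:(have := Rmin_l d1 d2; rewrite /t; lra).
have := H2 t ltac:(have := Rmin_r d1 d2; rewrite /t; lra).
rewrite !dot_ek; set u := F (vadd x (vscale t (ek k))) - F x => h2 h1.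
have : Rabs (t * (a k - b k)) <= t * (2 * eps).
  have -> : t * (a k - b k) = (u - t * b k) - (u - t * a k) by ring.
  by apply: Rle_trans (Rabs_triang _ _) _; rewrite Rabs_Ropp; lra.
rewrite Rabs_mult Rabs_right; last lra.
exact: Rmult_le_reg_l.
Qed.

Lemma grad_eq p (F : Vec p -> R) x a : has_gradient F x a -> grad F x = a.
Proof.
move=> Ha; apply: (has_gradient_unique (F := F) (x := x)) => //.
by rewrite /grad; apply: epsilon_spec; exists a.
Qed.

Lemma affine_gradient p (G : Vec p -> R) a b : (forall x, G x = dot a x + b) ->
  forall x, has_gradient G x a.
Proof.
move=> HG x eps he; exists 1; split => [|y _]; first lra.
rewrite !HG dot_sub.
have -> : dot a y + b - (dot a x + b) - (dot a y - dot a x) = 0 by ring.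
by rewrite Rabs_R0; apply: Rmult_le_pos; [lra | apply: vnorm_ge0].
Qed.

Lemma C2_has_grad p (F : Vec p -> R) : C2 F -> forall x, has_gradient F x (grad F x).
Proof. by move=> [G [H [h1 _]]] x; rewrite (grad_eq (h1 x)); apply: h1. Qed.

Lemma affine_has_grad p (F : Vec p -> R) : affine F -> forall x, has_gradient F x (grad F x).
Proof.
by move=> [a [b hab]] x; rewrite (grad_eq (affine_gradient hab x)); apply: affine_gradient.
Qed.

Lemma C2_seqcont p (F : Vec p -> R) : C2 F -> seqcont F.
Proof. by move=> HF y x; apply: gradient_seqcont (C2_has_grad HF x). Qed.

Lemma affine_seqcont p (F : Vec p -> R) : affine F -> seqcont F.
Proof. by move=> HF y x; apply: gradient_seqcont (affine_has_grad HF x). Qed.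

Lemma C2_grad_seqcont p (F : Vec p -> R) : C2 F -> forall l, seqcont (fun y => grad F y l).
Proof.
move=> [G [H [h1 [h2 _]]]] l y x hy.
have E z : grad F z l = G z l by rewrite (grad_eq (h1 z)).
apply: (Un_cv_ext (u := fun n => G (y n) l)) => [n|]; first by rewrite E.
by rewrite E; apply: gradient_seqcont (h2 x l) hy.
Qed.

Lemma affine_grad_seqcont p (F : Vec p -> R) : affine F ->
  forall l, seqcont (fun y => grad F y l).
Proof.
move=> [a [b hab]] l y x hy.
have E z : grad F z l = a l by rewrite (grad_eq (affine_gradient hab z)).
by apply: (Un_cv_ext (u := fun _ => a l)) => [n|]; rewrite ?E //; apply: CV_const.
Qed.

Definition sign_cond (lo hi y s : R) : Prop :=
  (y < 0 -> s = lo) /\ (y = 0 -> lo <= s <= hi) /\ (y > 0 -> s = hi).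

Lemma sign_cond_bounds lo hi y s : lo <= hi -> sign_cond lo hi y s -> lo <= s <= hi.
Proof.
move=> hlh [a [b c]]; case: (Rtotal_order y 0) => [h1|[h2|h3]]; last 2 [exact: b].
- by rewrite a //; lra.
- by rewrite c //; lra.
Qed.

Lemma sign_cond_inactive lo hi y s s' :
  y <> 0 -> sign_cond lo hi y s -> sign_cond lo hi y s' -> s = s'.
Proof.
move=> hy [a [_ c]] [a' [_ c']]; case: (Rtotal_order y 0) => [h1|[h2|h3]].
- by rewrite a // a'.
- by [].
- by rewrite c // c'.
Qed.

Lemma sign_cond_limit lo hi (u s : nat -> R) y S : lo <= hi ->
  Un_cv u y -> Un_cv s S -> (forall n, sign_cond lo hi (u n) (s n)) -> sign_cond lo hi y S.
Proof.
move=> hlh hu hs hc; split; [|split].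
- move=> hneg; apply: (cv_eventually_const hs).
  by have [N HN] := cv_eventually_neg hu hneg; exists N => n /HN; apply: (proj1 (hc n)).
- by move=> _; apply: (cv_bounds hs) => n; apply: sign_cond_bounds (hc n).
- move=> hpos; apply: (cv_eventually_const hs).
  by have [N HN] := cv_eventually_pos hu hpos; exists N => n /HN; apply: (proj2 (proj2 (hc n))).
Qed.

Lemma div_bounds a b c rho : 0 < rho -> a * rho <= c <= b * rho -> a <= c / rho <= b.
Proof.
move=> hrho [h1 h2]; have E : c / rho * rho = c by field; lra.
by split; apply: (Rmult_le_reg_r rho) => //; rewrite E.
Qed.

Lemma sign_cond_sgnR rho y c : 0 < rho -> (y <> 0 -> c = 0) ->
  (y = 0 -> c <= rho /\ - c <= rho) -> sign_cond (-1) 1 y (sgnR y + c / rho).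
Proof.
move=> hrho h0 h1; rewrite /sgnR /Rdiv; split; [|split] => hy.
- rewrite h0; last lra.
  by do 2 (case: Rlt_dec => /= ?; try lra); ring.
- have [b1 b2] := h1 hy; do 2 (case: Rlt_dec => /= ?; first lra).
  by rewrite Rplus_0_l; apply: div_bounds => //; lra.
- rewrite h0; last lra.
  by case: Rlt_dec => /= ?; try lra; ring.
Qed.

Lemma sign_cond_posR rho y c : 0 < rho -> (y <> 0 -> c = 0) ->
  (y = 0 -> c <= rho /\ - c <= 0) -> sign_cond 0 1 y (posR y + c / rho).
Proof.
move=> hrho h0 h1; rewrite /posR /Rdiv; split; [|split] => hy.
- rewrite h0; last lra.
  by case: Rlt_dec => /= ?; try lra; ring.
- have [b1 b2] := h1 hy; case: Rlt_dec => /= ?; first lra.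
  by rewrite Rplus_0_l; apply: div_bounds => //; lra.
- rewrite h0; last lra.
  by case: Rlt_dec => /= ?; try lra; ring.
Qed.

(** The optimality condition: existence, uniqueness and bounds of the coefficients. *)

Lemma sum_over_sum n m (F : 'I_n + 'I_m -> R) :
  \big[Rplus/R0]_(k : 'I_n + 'I_m) F k = vsum (fun i => F (inl i)) + vsum (fun j => F (inr j)).
Proof. exact: big_sumType. Qed.

Section Optimality.
Variables (p nr ns : nat) (f : Vec p -> R).
Variables (g : 'I_nr -> Vec p -> R) (h : 'I_ns -> Vec p -> R).

Lemma opt_cond_bounds rho x s t : opt_cond f g h rho x s t ->
  (forall i, -1 <= s i <= 1) /\ (forall j, 0 <= t j <= 1).
Proof.
move=> [_ [Hs Ht]]; split => [i|j].
  by apply: (sign_cond_bounds _ (Hs i)); lra.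
by apply: (sign_cond_bounds _ (Ht j)); lra.
Qed.

Lemma opt_cond_unique rho x s t s' t' :
  0 < rho -> active_lin_indep g h x -> opt_cond f g h rho x s t ->
  opt_cond f g h rho x s' t' -> (forall i, s' i = s i) /\ (forall j, t' j = t j).
Proof.
move=> hrho HLI [E1 [S1 T1]] [E2 [S2 T2]].
have [Ha Hb] : (forall i, s' i - s i = 0) /\ (forall j, t' j - t j = 0).
  apply: HLI => [i hi | j hj | l].
  - by rewrite (sign_cond_inactive hi (S1 i) (S2 i)); ring.
  - by rewrite (sign_cond_inactive hj (T1 j) (T2 j)); ring.
  - rewrite (vsum_ext (G := fun i => s' i * grad (g i) x l - s i * grad (g i) x l));
      last by move=> i; ring.
    rewrite (vsum_ext (G := fun j => t' j * grad (h j) x l - t j * grad (h j) x l));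
      last by move=> j; ring.
    rewrite !vsum_sub; apply: (Rmult_eq_reg_l rho); last lra.
    by have := E1 l; have := E2 l; lra.
by split => [i|j]; [have := Ha i | have := Hb j]; lra.
Qed.

Definition cgrad x (k : 'I_nr + 'I_ns) : Vec p :=
  match k with inl i => grad (g i) x | inr j => grad (h j) x end.
Definition cactive x (k : 'I_nr + 'I_ns) : bool :=
  match k with inl i => g i x == 0 | inr j => h j x == 0 end.
Definition ckink (k : 'I_nr + 'I_ns) (q : R) : R :=
  match k with inl _ => Rabs q | inr _ => Rmax 0 q end.

(* the derivative of E_rho at x, with the kinks of the active terms omitted *)
Definition smooth_grad rho x : Vec p := fun l =>
  grad f x l + rho * vsum (fun i => sgnR (g i x) * grad (g i) x l)
             + rho * vsum (fun j => posR (h j x) * grad (h j) x l).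

Lemma ckink0 k : ckink k 0 = 0.
Proof. by case: k => ? /=; rewrite ?Rabs_R0 ?Rmax_left //; lra. Qed.

Lemma active_lin_indep_on x : active_lin_indep g h x -> lin_indep_on (cgrad x) (cactive x).
Proof.
move=> HLI c hc0 hc k.
have [Ha Hb] : (forall i, c (inl i) = 0) /\ (forall j, c (inr j) = 0).
  apply: (HLI (fun i => c (inl i)) (fun j => c (inr j))) => [i hi | j hj | l].
  - by apply: hc0 => /=; apply/eqP.
  - by apply: hc0 => /=; apply/eqP.
  - by move: (hc l); rewrite sum_over_sum.
by case: k.
Qed.

(* the first-order condition, rewritten as a domination of the linear form
   smooth_grad by the sublinear kinks of the active terms *)
Lemma smooth_grad_dominated rho x : 0 <= rho -> minimizer (Epen f g h rho) x ->
  has_gradient f x (grad f x) -> (forall i, has_gradient (g i) x (grad (g i) x)) ->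
  (forall j, has_gradient (h j) x (grad (h j) x)) ->
  forall d, 0 <= dot (smooth_grad rho x) d + rho *
    \big[Rplus/R0]_(k : 'I_nr + 'I_ns) (if cactive x k then ckink k (dot (cgrad x k) d) else 0).
Proof.
move=> hrho hmin hf hg hh d.
have -> : dot (smooth_grad rho x) d = dot (grad f x) d
    + rho * vsum (fun i => sgnR (g i x) * dot (grad (g i) x) d)
    + rho * vsum (fun j => posR (h j x) * dot (grad (h j) x) d).
  by rewrite /smooth_grad !dot_addl !dot_scall /vsum !dot_bigl.
rewrite sum_over_sum /=.
have := penalty_first_order d hrho hmin hf hg hh.
by rewrite !vsum_add; lra.
Qed.

(* Existence of the coefficients at a minimizer: smooth_grad is a combination
   of the active gradients with multipliers bounded by the kinks, and the
   coefficients are sgnR (resp. posR) corrected by multiplier / rho. *)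
Lemma opt_cond_exists rho x : 0 < rho -> minimizer (Epen f g h rho) x ->
  has_gradient f x (grad f x) -> (forall i, has_gradient (g i) x (grad (g i) x)) ->
  (forall j, has_gradient (h j) x (grad (h j) x)) ->
  active_lin_indep g h x -> exists s t, opt_cond f g h rho x s t.
Proof.
move=> hrho hmin hf hg hh HLI.
have dom := smooth_grad_dominated (Rlt_le _ _ hrho) hmin hf hg hh.
have [c [hc0 heq]] := multipliers_exist ckink0 dom.
have hbd := multipliers_bounded ckink0 dom (active_lin_indep_on HLI) hc0 heq.
exists (fun i => sgnR (g i x) + c (inl i) / rho), (fun j => posR (h j x) + c (inr j) / rho).
split; [|split].
- move=> l; have := heq l; rewrite sum_over_sum /smooth_grad /=.
  have -> : rho * vsum (fun i => (sgnR (g i x) + c (inl i) / rho) * grad (g i) x l)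
      = rho * vsum (fun i => sgnR (g i x) * grad (g i) x l)
        + vsum (fun i => c (inl i) * grad (g i) x l).
    by rewrite -!vsum_scal -vsum_add; apply: vsum_ext => i; field; lra.
  have -> : rho * vsum (fun j => (posR (h j x) + c (inr j) / rho) * grad (h j) x l)
      = rho * vsum (fun j => posR (h j x) * grad (h j) x l)
        + vsum (fun j => c (inr j) * grad (h j) x l).
    by rewrite -!vsum_scal -vsum_add; apply: vsum_ext => j; field; lra.
  set Sg := vsum (fun i => c (inl i) * grad (g i) x l).
  set Sh := vsum (fun j => c (inr j) * grad (h j) x l).
  lra.
- move=> i; apply: sign_cond_sgnR => // [hi | /eqP hi].
    by apply: hc0 => /=; apply/eqP.
  by have := hbd (inl i) hi; rewrite /= Rabs_Ropp Rabs_R1; lra.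
- move=> j; apply: sign_cond_posR => // [hj | /eqP hj].
    by apply: hc0 => /=; apply/eqP.
  by have := hbd (inr j) hj; rewrite /= Rmax_right ?Rmax_left; lra.
Qed.

End Optimality.

(** Continuity of the coefficients. *)

Lemma open_interval_pos (J : R -> Prop) rho :
  is_open_interval J -> (forall r, J r -> 0 <= r) -> J rho -> 0 < rho.
Proof.
move=> [_ HJ] Hn hr; have [e [he He]] := HJ rho hr.
have : J (rho - e / 2) by apply: He; rewrite Rabs_left; lra.
by move/Hn; lra.
Qed.

Section Coefficients.
Variables (p nr ns : nat) (f : Vec p -> R).
Variables (g : 'I_nr -> Vec p -> R) (h : 'I_ns -> Vec p -> R).
Hypotheses (Hf : C2 f) (Hg : forall i, affine (g i)) (Hh : forall j, C2 (h j)).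

(* the coefficients of the optimality condition at x(rho), whenever they exist *)
Definition kkt_coef rho : ('I_nr -> R) * ('I_ns -> R) :=
  epsilon (inhabits (fun _ => 0, fun _ => 0))
    (fun st => opt_cond f g h rho (xmin f g h rho) st.1 st.2).

Lemma kkt_coef_spec rho : 0 < rho -> minimizer (Epen f g h rho) (xmin f g h rho) ->
  active_lin_indep g h (xmin f g h rho) ->
  opt_cond f g h rho (xmin f g h rho) (kkt_coef rho).1 (kkt_coef rho).2.
Proof.
move=> hrho hmin HLI; apply: (epsilon_spec _
  (fun st => opt_cond f g h rho (xmin f g h rho) st.1 st.2)).
have [s [t ho]] := opt_cond_exists hrho hmin (C2_has_grad Hf _)
  (fun i => affine_has_grad (Hg i) _) (fun j => C2_has_grad (Hh j) _) HLI.
by exists (s, t).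
Qed.

Lemma opt_cond_limit (rn : nat -> R) rho0 (xn : nat -> Vec p) x0
  (sn : nat -> 'I_nr -> R) (tn : nat -> 'I_ns -> R) S T :
  Un_cv rn rho0 -> Un_cv (fun n => vnorm (vsub (xn n) x0)) 0 ->
  (forall i, Un_cv (fun n => sn n i) (S i)) -> (forall j, Un_cv (fun n => tn n j) (T j)) ->
  (forall n, opt_cond f g h (rn n) (xn n) (sn n) (tn n)) -> opt_cond f g h rho0 x0 S T.
Proof.
move=> hr hx hs ht hopt; split; [|split].
- move=> l; apply: (UL_sequence (fun n => grad f (xn n) l
      + rn n * vsum (fun i => sn n i * grad (g i) (xn n) l)
      + rn n * vsum (fun j => tn n j * grad (h j) (xn n) l))).
    apply: CV_plus; first apply: CV_plus.
    + exact: (C2_grad_seqcont Hf l hx).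
    + apply: CV_mult => //; apply: (CV_vsum
        (u := fun i n => sn n i * grad (g i) (xn n) l)) => i.
      by apply: CV_mult => //; apply: (affine_grad_seqcont (Hg i) l hx).
    + apply: CV_mult => //; apply: (CV_vsum
        (u := fun j n => tn n j * grad (h j) (xn n) l)) => j.
      by apply: CV_mult => //; apply: (C2_grad_seqcont (Hh j) l hx).
  apply: (Un_cv_ext (u := fun _ => 0)); last exact: CV_const.
  by move=> n; rewrite (proj1 (hopt n) l).
- move=> i; apply: (sign_cond_limit _ (affine_seqcont (Hg i) hx) (hs i)); first lra.
  by move=> n; apply: (proj1 (proj2 (hopt n)) i).
- move=> j; apply: (sign_cond_limit _ (C2_seqcont (Hh j) hx) (ht j)); first lra.
  by move=> n; apply: (proj2 (proj2 (hopt n)) j).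
Qed.

Variables (J : R -> Prop) (rho0 : R).
Hypotheses (HJ : is_open_interval J) (J0 : J rho0) (Jnn : forall rho, J rho -> 0 <= rho).
Hypothesis HSC : forall rho, J rho ->
  strictly_convex (Epen f g h rho) /\ coercive (Epen f g h rho).
Hypothesis HLI : forall rho x, J rho -> minimizer (Epen f g h rho) x -> active_lin_indep g h x.

Let xm := xmin f g h.
Let sc rho := (kkt_coef rho).1.
Let tc rho := (kkt_coef rho).2.

Lemma data_seqcont : seqcont f /\ (forall i, seqcont (g i)) /\ (forall j, seqcont (h j)).
Proof.
split; first exact: C2_seqcont.
by split => k; [apply: affine_seqcont | apply: C2_seqcont].
Qed.

Lemma xm_spec rho : J rho -> minimizer (Epen f g h rho) (xm rho) /\
  (forall y, minimizer (Epen f g h rho) y -> y = xm rho).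
Proof.
have [Hfc [Hgc Hhc]] := data_seqcont.
by move=> hJ; have [hs hc] := HSC hJ; apply: xmin_spec.
Qed.

Lemma xm_minimizer rho : J rho -> minimizer (Epen f g h rho) (xm rho).
Proof. by move=> hJ; case: (xm_spec hJ). Qed.

Lemma coef_opt_cond rho : J rho -> opt_cond f g h rho (xm rho) (sc rho) (tc rho).
Proof.
move=> hJ; apply: kkt_coef_spec (open_interval_pos HJ Jnn hJ) (xm_minimizer hJ) _.
exact: HLI hJ (xm_minimizer hJ).
Qed.

(* The coefficients are bounded, so along a sequence rn -> rho0 they have a
   convergent subsequence; its limit satisfies the optimality condition at
   x(rho0), hence is the unique coefficient vector there. *)
Lemma coef_subsequence rn : (forall n, J (rn n)) -> Un_cv rn rho0 ->
  exists psi, extraction psi /\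
    (forall i, Un_cv (fun n => sc (rn (psi n)) i) (sc rho0 i)) /\
    (forall j, Un_cv (fun n => tc (rn (psi n)) j) (tc rho0 j)).
Proof.
move=> hJn hrn; have [Hfc [Hgc Hhc]] := data_seqcont.
have hx : Un_cv (fun n => vnorm (vsub (xm (rn n)) (xm rho0))) 0.
  move=> eps he; have [d [hd Hd]] := xmin_continuous Hfc Hgc Hhc HJ J0 HSC he.
  have [N HN] := hrn d hd; exists N => n hn.
  rewrite /R_dist Rminus_0_r Rabs_right; last exact/Rle_ge/vnorm_ge0.
  exact: Hd (hJn n) (HN n hn).
have bnd n : (forall i, Rabs (sc (rn n) i) <= 1) /\ (forall j, Rabs (tc (rn n) j) <= 1).
  have [b1 b2] := opt_cond_bounds (coef_opt_cond (hJn n)).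
  by split => k; apply: Rabs_le; [have := b1 k | have := b2 k]; lra.
have [phi1 [S [hp1 hS]]] := BW_vec (u := fun n => sc (rn n)) (fun n => proj1 (bnd n)).
have [phi2 [T [hp2 hT]]] :=
  BW_vec (u := fun n => tc (rn (phi1 n))) (fun n => proj2 (bnd (phi1 n))).
pose psi n := phi1 (phi2 n); have hp : extraction psi := extraction_comp hp1 hp2.
have hS' i : Un_cv (fun n => sc (rn (psi n)) i) (S i).
  exact: (CV_extract (u := fun n => sc (rn (phi1 n)) i) hp2 (hS i)).
have hlim : opt_cond f g h rho0 (xm rho0) S T.
  apply: (opt_cond_limit (CV_extract hp hrn) (CV_extract hp hx) hS' hT) => n.
  exact: coef_opt_cond.
have [eS eT] := opt_cond_unique (open_interval_pos HJ Jnn J0)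
  (HLI J0 (xm_minimizer J0)) (coef_opt_cond J0) hlim.
by exists psi; split => //; split => [i|j]; rewrite -?eS -?eT.
Qed.

Lemma coef_unique_at rho : J rho -> forall s' t', opt_cond f g h rho (xm rho) s' t' ->
  (forall i, s' i = sc rho i) /\ (forall j, t' j = tc rho j).
Proof.
move=> hJ s' t'; apply: opt_cond_unique (open_interval_pos HJ Jnn hJ) _ (coef_opt_cond hJ).
exact: HLI hJ (xm_minimizer hJ).
Qed.

Lemma sc_continuous i eps : 0 < eps -> exists delta, 0 < delta /\
  forall rho, J rho -> Rabs (rho - rho0) < delta -> Rabs (sc rho i - sc rho0 i) < eps.
Proof.
apply: (continuity_by_subsequences (r := 1) (D := fun rho => Rabs (sc rho i - sc rho0 i)));
  first lra.
move=> rn hrn hcv; have [psi [hp [hs _]]] := coef_subsequence (fun n => proj1 (hrn n)) hcv.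
by exists psi; split => //; apply: cv_dist.
Qed.

Lemma tc_continuous j eps : 0 < eps -> exists delta, 0 < delta /\
  forall rho, J rho -> Rabs (rho - rho0) < delta -> Rabs (tc rho j - tc rho0 j) < eps.
Proof.
apply: (continuity_by_subsequences (r := 1) (D := fun rho => Rabs (tc rho j - tc rho0 j)));
  first lra.
move=> rn hrn hcv; have [psi [hp [_ ht]]] := coef_subsequence (fun n => proj1 (hrn n)) hcv.
by exists psi; split => //; apply: cv_dist.
Qed.

End Coefficients.

Theorem lemma1 (p nr ns : nat) (f : Vec p -> R)
  (g : 'I_nr -> Vec p -> R) (h : 'I_ns -> Vec p -> R)
  (Hf_cvx : convex f) (Hf_C2 : C2 f)
  (Hg_aff : forall i, affine (g i))
  (Hh_cvx : forall j, convex (h j)) (Hh_C2 : forall j, C2 (h j)) :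
  (* 1. uniqueness *)
  (forall rho, 0 <= rho -> strictly_convex (Epen f g h rho) ->
     forall x y, minimizer (Epen f g h rho) x -> minimizer (Epen f g h rho) y ->
     x = y)
  /\
  (* 2. continuity of the minimizer *)
  (forall (rho0 : R) (J : R -> Prop),
     0 < rho0 -> is_open_interval J -> J rho0 -> (forall rho, J rho -> 0 <= rho) ->
     (forall rho, J rho ->
        strictly_convex (Epen f g h rho) /\ coercive (Epen f g h rho)) ->
     exists xm : R -> Vec p,
       (forall rho, J rho ->
          minimizer (Epen f g h rho) (xm rho) /\
          (forall y, minimizer (Epen f g h rho) y -> y = xm rho)) /\
       (forall eps, 0 < eps -> exists delta, 0 < delta /\
          forall rho, J rho -> Rabs (rho - rho0) < delta ->
            vnorm (vsub (xm rho) (xm rho0)) < eps))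
  /\
  (* 3. continuity of the coefficients *)
  (forall (rho0 : R) (J : R -> Prop),
     0 < rho0 -> is_open_interval J -> J rho0 -> (forall rho, J rho -> 0 <= rho) ->
     (forall rho, J rho ->
        strictly_convex (Epen f g h rho) /\ coercive (Epen f g h rho)) ->
     (forall rho x, J rho -> minimizer (Epen f g h rho) x ->
        active_lin_indep g h x) ->
     exists (xm : R -> Vec p) (sc : R -> 'I_nr -> R) (tc : R -> 'I_ns -> R),
       (forall rho, J rho ->
          minimizer (Epen f g h rho) (xm rho) /\
          (forall y, minimizer (Epen f g h rho) y -> y = xm rho) /\
          opt_cond f g h rho (xm rho) (sc rho) (tc rho) /\
          (forall s' t', opt_cond f g h rho (xm rho) s' t' ->
             (forall i, s' i = sc rho i) /\ (forall j, t' j = tc rho j))) /\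
       (forall i eps, 0 < eps -> exists delta, 0 < delta /\
          forall rho, J rho -> Rabs (rho - rho0) < delta ->
            Rabs (sc rho i - sc rho0 i) < eps) /\
       (forall j eps, 0 < eps -> exists delta, 0 < delta /\
          forall rho, J rho -> Rabs (rho - rho0) < delta ->
            Rabs (tc rho j - tc rho0 j) < eps)).
Proof.
have [Hf [Hg Hh]] := data_seqcont Hf_C2 Hg_aff Hh_C2.
split; [|split].
- by move=> rho _ hsc; apply: strictly_convex_unique_minimizer.
- move=> rho0 J _ HJ J0 Jnn HSC; exists (xmin f g h); split.
    by move=> rho; apply: (xm_spec Hf_C2 Hg_aff Hh_C2 HSC).
  by move=> eps; apply: (xmin_continuous Hf Hg Hh HJ J0 HSC).
move=> rho0 J _ HJ J0 Jnn HSC HLI.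
exists (xmin f g h), (fun rho => (kkt_coef f g h rho).1), (fun rho => (kkt_coef f g h rho).2).
split; [|split].
- move=> rho hJ; have [hmin huniq] := xm_spec Hf_C2 Hg_aff Hh_C2 HSC hJ.
  do 2! split => //; split.
    exact: (coef_opt_cond Hf_C2 Hg_aff Hh_C2 HJ Jnn HSC HLI hJ).
  exact: (coef_unique_at Hf_C2 Hg_aff Hh_C2 HJ Jnn HSC HLI hJ).
- by move=> i eps; apply: (sc_continuous Hf_C2 Hg_aff Hh_C2 HJ J0 Jnn HSC HLI i).
- by move=> j eps; apply: (tc_continuous Hf_C2 Hg_aff Hh_C2 HJ J0 Jnn HSC HLI j).
Qed.
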